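(* Let $n,k$ be positive integers and $X$ a nonempty subset of $[n]$. Let $Q\colon\mathbb{F}_2^{\binom{[n]}{\leq 2}}\to\mathbb{Z}_{2^k}$ be a $k$-integer polynomial of degree $d\geq 1$, written as $Q(x)=\alpha+\sum_{F\in\binom{\binom{[n]}{\leq 2}}{\leq d}}\lambda_F\prod_{e\in F}x(e)\bmod 2^k$, and let $\boldsymbol\lambda=\langle\lambda_F\rangle$ be its coefficients in this representation. Let $V$ be a block HJ-subspace of $\mathbb{F}_2^{\binom{[n]}{\leq 2}}$ of dimension $m$ with wildcard sets $(I_1,\dots,I_m)$ and associated embedding $e_V\colon\mathbb{F}_2^{\binom{[m]}{\leq 2}}\to V$. Assume (i) $\boldsymbol\lambda$ is canonical in $X$, and (ii) for every $i\in[m]$, $I_i\subseteq X$ and $|I_i|=(d+1)!\,2^k$. Then $\deg(Q\circ e_V)<\deg(Q)$.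
   Context: $\binom{S}{\leq j}$ denotes the set of nonempty subsets of $S$ with at most $j$ elements; $\mathbb{Z}_{2^k}=\mathbb{Z}/2^k\mathbb{Z}$. Integer polynomial: $Q\colon\mathbb{F}_2^{\binom{[n]}{\leq 2}}\to\mathbb{Z}_{2^k}$ is a $k$-integer polynomial of degree at most $d$ if $Q(x)=\alpha+\sum_{F}\lambda_F\prod_{e\in F}x(e)\bmod 2^k$, summing over $F\in\binom{\binom{[n]}{\leq 2}}{\leq d}$, with $\alpha,\lambda_F\in\mathbb{Z}_{2^k}$, $x(e)\in\{0,1\}\subseteq\mathbb{Z}_{2^k}$; its degree is the least such $d$. HJ-subspaces: let $n\geq m\geq 1$ and $\boldsymbol{I}=(I_1,\dots,I_m)$ pairwise disjoint nonempty subsets of $[n]$ with $\min I_1<\dots<\min I_m$. For $q\in\binom{[m]}{\leq 2}$ let $b_q$ be the indicator of $\{p\in\binom{[n]}{\leq 2}: p\subseteq\bigcup_{i\in q}I_i,\ p\cap I_i\neq\emptyset\ \forall i\in q\}$, and $\mathrm{Id}_{\boldsymbol I}(x)=\sum_q x(q)b_q$. An HJ-embedding is $e=\mathrm{Id}_{\boldsymbol I}+c$ with $c\in\mathbb{F}_2^{\binom{[n]}{\leq 2}}$ vanishing on $\binom{I_1\cup\dots\cup I_m}{\leq 2}$; its image $V$ is an HJ-subspace of dimension $m$ with wildcard sets $\boldsymbol I$ and $e_V:=e$. $V$ is block if $\max I_i<\min I_{i+1}$ for all $i<m$. Type and canonical: for a nonempty set $F$ of nonempty subsets of $[n]$, writing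 $\bigcup F=\{u_1<\dots<u_\ell\}$, $\tau(F)=\{S\subseteq[\ell]:\{u_i:i\in S\}\in F\}$. The collection $\boldsymbol\lambda$ is canonical in $X$ if $\lambda_{F_1}=\lambda_{F_2}$ whenever $F_1,F_2\in\binom{\binom{X}{\leq 2}}{\leq d}$ and $\tau(F_1)=\tau(F_2)$. *)

From HB Require Import structures.
From mathcomp Require Import all_boot all_order all_algebra.
Set Implicit Arguments. Unset Strict Implicit. Unset Printing Implicit Defensive.
Import Order.TTheory GRing.Theory.
Local Open Scope ring_scope.

(* [n] is modelled by 'I_n (0-based, with its natural order). *)

Definition E (n : nat) := {S : {set 'I_n} | (0 < #|S| <= 2)%N}.
HB.instance Definition _ n := Finite.on (E n).

Definition intpoly_le (k : nat) (N : finType)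
    (Q : {ffun N -> bool} -> 'Z_(2 ^ k)) (d : nat) : Prop :=
  exists (alpha : 'Z_(2 ^ k)) (lam : {set N} -> 'Z_(2 ^ k)),
    forall x : {ffun N -> bool},
      Q x = alpha + \sum_(F : {set N} | (0 < #|F| <= d)%N)
                      lam F * \prod_(e in F) ((x e : nat)%:R).

Definition intpoly_deg (k : nat) (N : finType)
    (Q : {ffun N -> bool} -> 'Z_(2 ^ k)) (d : nat) : Prop :=
  intpoly_le Q d /\ forall d', intpoly_le Q d' -> (d <= d')%N.

Definition Ucup n (F : {set E n}) : {set 'I_n} := \bigcup_(e in F) val e.

Lemma rank_lt n (U : {set 'I_n}) (u : 'I_n) : (#|[set v in U | (v < u)%N]| < n)%N.
Proof.
apply: (leq_trans _ (eq_leq (card_ord n))); rewrite -cardsT.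
apply: proper_card; rewrite properT; apply/eqP => H.
have : u \in [set v in U | (v < u)%N] by rewrite H inE.
by rewrite inE ltnn andbF.
Qed.

Definition rk n (U : {set 'I_n}) (u : 'I_n) : 'I_n := Ordinal (rank_lt U u).

(* The type tau(F): writing U = \bigcup F = {u_0 < ... < u_(l-1)},
   tau(F) = { S subset of [l] : {u_i : i in S} \in F }
          = { rank-image of e : e \in F }. *)
Definition rkimg n (U : {set 'I_n}) (e : E n) : {set 'I_n} :=
  [set rk U u | u in val e].
Definition tau n (F : {set E n}) : {set {set 'I_n}} :=
  [set rkimg (Ucup F) e | e in F].

Definition canonical_in k n (d : nat) (X : {set 'I_n})
    (lam : {set E n} -> 'Z_(2 ^ k)) : Prop :=
  forall F1 F2 : {set E n},
    (forall e, e \in F1 -> val e \subset X) -> (0 < #|F1| <= d)%N ->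
    (forall e, e \in F2 -> val e \subset X) -> (0 < #|F2| <= d)%N ->
    tau F1 = tau F2 -> lam F1 = lam F2.

Definition wildcards n m (I : 'I_m -> {set 'I_n}) : Prop :=
  [/\ (forall i j : 'I_m, i != j -> [disjoint I i & I j]),
      (forall i, I i != set0) &
      (forall i j : 'I_m, (i < j)%N ->
         exists2 a, a \in I i & forall b, b \in I j -> (a < b)%N)].

Definition block n m (I : 'I_m -> {set 'I_n}) : Prop :=
  forall i j : 'I_m, nat_of_ord j = i.+1 ->
    forall a b, a \in I i -> b \in I j -> (a < b)%N.

Definition bq n m (I : 'I_m -> {set 'I_n}) (q : E m) (p : E n) : bool :=
  (val p \subset \bigcup_(i in val q) I i) &&
  [forall i in val q, ~~ [disjoint val p & I i]].

Definition IdI n m (I : 'I_m -> {set 'I_n}) (x : {ffun E m -> bool})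
  : {ffun E n -> bool} :=
  [ffun p => \big[addb/false]_(q : E m) (x q && bq I q p)].

Definition HJemb n m (I : 'I_m -> {set 'I_n}) (c : {ffun E n -> bool})
    (x : {ffun E m -> bool}) : {ffun E n -> bool} :=
  [ffun p => addb (IdI I x p) (c p)].

Definition c_admissible n m (I : 'I_m -> {set 'I_n}) (c : {ffun E n -> bool})
  : Prop :=
  forall p : E n, val p \subset \bigcup_(i : 'I_m) I i -> c p = false.

From HB Require Import structures.
From mathcomp Require Import all_boot all_order all_algebra zify.
From Stdlib Require Import Classical Wf_nat.
Set Implicit Arguments. Unset Strict Implicit. Unset Printing Implicit Defensive.
Import GRing.Theory.

(* Substituting e_V into Q sends each coordinate p inside the union of the wildcard
   sets to the coordinate of [m] made of the blocks that p meets, and every other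
   coordinate to a constant.  Hence Q o e_V is a polynomial whose coefficient at a
   monomial G is a sum of lambda_F over the sets F mapped onto G.  When #|G| = d,
   such an F consists of d coordinates inside the wildcard sets, in bijection with G.
   Fix a block i0 met by G and group these F by their type, their points outside
   I_i0 and the number a of their points inside I_i0.  By canonicity lambda is
   constant on a group, and since the blocks are consecutive intervals, moving the
   points inside I_i0 order-preservingly puts the group in bijection with the
   a-subsets of I_i0.  Injectivity onto G leaves at most one coordinate contained in
   I_i0, so 1 <= a <= d + 1, and 2^k divides 'C((d+1)! 2^k, a): every coefficient of
   degree d vanishes in Z_(2^k). *)

Lemma prodr_nat_bool (R : comPzSemiRingType) (T : finType) (A : {pred T})
    (b : T -> bool) :
  (\prod_(e in A) ((b e : nat)%:R : R) = ([forall e in A, b e] : nat)%:R)%R.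
Proof.
case: (boolP [forall e in A, b e]) => [/forall_inP allb | ].
  by apply: big1 => e /allb ->.
rewrite negb_forall_in => /exists_inP [e eA /negbTE be].
by rewrite (bigD1 e) //= be mul0r.
Qed.

Lemma leq_card_bigcup (T J : finType) (P : pred J) (f : J -> {set T}) :
  #|\bigcup_(j | P j) f j| <= \sum_(j | P j) #|f j|.
Proof.
apply: (big_rec2 (fun (A : {set T}) s => #|A| <= s)); first by rewrite cards0.
by move=> j A s _ le_As; rewrite cardsU (leq_trans (leq_subr _ _)) ?leq_add2l.
Qed.

Lemma imset_in_inj (aT rT : finType) (f : aT -> rT) (D A B : {set aT}) :
  {in D &, injective f} -> A \subset D -> B \subset D -> f @: A = f @: B -> A = B.
Proof.
move=> injf.
suff sub (C C' : {set aT}) : C \subset D -> C' \subset D -> f @: C = f @: C' -> C \subset C'.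
  by move=> AD BD fAB; apply/eqP; rewrite eqEsubset (sub A B) ?(sub B A).
move=> CD C'D fCC'; apply/subsetP => x xC.
have /imsetP [y yC' fxy] : f x \in f @: C' by rewrite -fCC' imset_f.
by rewrite (injf x y (subsetP CD x xC) (subsetP C'D y yC') fxy).
Qed.

Lemma not_disjointP (T : finType) (A B : {set T}) :
  reflect (exists2 u, u \in A & u \in B) (~~ [disjoint A & B]).
Proof.
rewrite -setI_eq0; apply: (iffP (set0Pn _)) => [[u]|[u uA uB]].
  by rewrite inE => /andP[]; exists u.
by exists u; rewrite inE uA.
Qed.

Lemma dvdn_bin t N a : 0 < a -> a * t %| N -> t %| 'C(N, a).
Proof.
case: a => [|a] // _ /dvdnP [q ->].
have := mul_bin_diag (q * (a.+1 * t)) a.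
rewrite mulnCA -mulnA => /eqP; rewrite eqn_pmul2l // => /eqP <-.
by rewrite dvdn_mulr ?dvdn_mull.
Qed.

Lemma dvdn_bin_fact t d a : 0 < a <= d.+1 -> t %| 'C((d.+1)`! * t, a).
Proof.
case/andP => a_gt0 le_ad.
by rewrite (dvdn_bin a_gt0) // dvdn_mul // dvdn_fact ?a_gt0.
Qed.

Lemma Zp_nat_eq0 p t : 1 < p -> p %| t -> (t%:R : 'Z_p)%R = 0%R.
Proof. by move=> p_gt1 /dvdnP [q ->]; rewrite natrM (pchar_Zp p_gt1) mulr0. Qed.

Section Rank.
Variable n : nat.
Implicit Types (S A B : {set 'I_n}) (u v : 'I_n).

Lemma rk_setU A B u : [disjoint A & B] -> rk (A :|: B) u = rk A u + rk B u :> nat.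
Proof.
move=> dAB; rewrite /= -cardsUI.
have -> : [set v in A | v < u] :&: [set v in B | v < u] = set0.
  apply/setP => v; rewrite !inE; apply/negP => /andP [/andP [vA _] /andP [vB _]].
  by rewrite (disjointFr dAB vA) in vB.
by rewrite cards0 addn0; apply: eq_card => v; rewrite !inE andb_orl.
Qed.

Lemma ltn_rk S u v : u \in S -> u < v -> rk S u < rk S v.
Proof.
move=> uS ltuv; apply: proper_card; rewrite properE; apply/andP; split.
  by apply/subsetP => w; rewrite !inE => /andP [-> /ltn_trans ->].
by apply/subsetP => /(_ u); rewrite !inE uS ltuv ltnn => /(_ isT).
Qed.

Lemma rk_inj S : {in S &, injective (rk S)}.
Proof.
move=> u v uS vS eq_rk.
by case: (ltngtP u v) => [/(ltn_rk uS) | /(ltn_rk vS) | /val_inj //]; rewrite eq_rk ltnn.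
Qed.

Lemma rk_lt_card S u : u \in S -> rk S u < #|S|.
Proof.
move=> uS; apply: proper_card; rewrite properE; apply/andP; split.
  by apply/subsetP => w; rewrite inE => /andP [].
by apply/subsetP => /(_ u uS); rewrite inE ltnn andbF.
Qed.

Lemma imset_rk S : rk S @: S = [set j : 'I_n | j < #|S|].
Proof.
apply/eqP; rewrite eqEcard; apply/andP; split.
  by apply/subsetP => _ /imsetP [u uS ->]; rewrite inE rk_lt_card.
rewrite card_in_imset; last exact: rk_inj.
have le_Sn : #|S| <= n := leq_trans (max_card _) (eq_leq (card_ord n)).
rewrite -[X in _ <= X]card_ord.
apply: (leq_trans _ (leq_imset_card (widen_ord le_Sn) _)).
apply/subset_leq_card/subsetP => j; rewrite inE => ltjS.
by apply/imsetP; exists (Ordinal ltjS) => //; apply: val_inj.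
Qed.

Definition rank_match S0 S u : 'I_n := odflt u [pick v in S | rk S v == rk S0 u].

Section RankMatch.
Variables S0 S : {set 'I_n}.
Hypothesis cardS : #|S0| = #|S|.

Lemma rank_matchP u : u \in S0 ->
  rank_match S0 S u \in S /\ rk S (rank_match S0 S u) = rk S0 u.
Proof.
move=> uS0; rewrite /rank_match; case: pickP => [v /andP [vS /eqP ->] // | none].
have : rk S0 u \in rk S @: S by rewrite imset_rk inE -cardS rk_lt_card.
by case/imsetP => v vS eq_rk; move: (none v); rewrite vS eq_rk eqxx.
Qed.

Lemma rank_match_inj : {in S0 &, injective (rank_match S0 S)}.
Proof.
move=> u v uS0 vS0 eq_uv; apply: (rk_inj uS0 vS0).
by case: (rank_matchP uS0) (rank_matchP vS0) => _ <- [_ <-]; rewrite eq_uv.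
Qed.

Lemma rank_match_imset : rank_match S0 S @: S0 = S.
Proof.
apply/eqP; rewrite eqEcard card_in_imset ?cardS; last exact: rank_match_inj.
by rewrite leqnn andbT; apply/subsetP => _ /imsetP [u /rank_matchP [? _] ->].
Qed.

End RankMatch.
End Rank.

Section Relabel.
Variable n : nat.
Implicit Types (F : {set E n}) (e : E n) (f : 'I_n -> 'I_n).

Lemma sub_Ucup F e : e \in F -> val e \subset Ucup F.
Proof. exact: bigcup_sup. Qed.

Lemma tau_inj F1 F2 : Ucup F1 = Ucup F2 -> tau F1 = tau F2 -> F1 = F2.
Proof.
suff sub F F' : Ucup F = Ucup F' -> tau F = tau F' -> F \subset F'.
  by move=> eqU eqT; apply/eqP; rewrite eqEsubset (sub F1 F2) ?(sub F2 F1).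
move=> eqU eqT; apply/subsetP => e eF.
have /imsetP [e' e'F' eq_img] : rkimg (Ucup F) e \in tau F' by rewrite -eqT imset_f.
rewrite -eqU in eq_img.
have e'U : val e' \subset Ucup F by rewrite eqU sub_Ucup.
by rewrite (val_inj (imset_in_inj (@rk_inj n _) (sub_Ucup eF) e'U eq_img)).
Qed.

Definition relabel f (e : E n) : E n := insubd e (f @: val e).

Lemma relabelE f e : {in val e &, injective f} -> val (relabel f e) = f @: val e.
Proof.
move=> injf; rewrite insubdK //; change (0 < #|f @: val e| <= 2).
by rewrite card_in_imset //; exact: (valP e).
Qed.

Section RelabelSet.
Variables (f : 'I_n -> 'I_n) (F : {set E n}).
Hypothesis injf : {in Ucup F &, injective f}.

Lemma relabelE_in e : e \in F -> val (relabel f e) = f @: val e.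
Proof. by move=> eF; apply: relabelE; apply: sub_in2 injf; apply/subsetP/sub_Ucup. Qed.

Lemma Ucup_relabel : Ucup (relabel f @: F) = f @: Ucup F.
Proof.
apply/setP => u; apply/bigcupP/imsetP.
  case=> _ /imsetP [e eF ->]; rewrite relabelE_in // => /imsetP [v ve ->].
  by exists v => //; apply/bigcupP; exists e.
case=> v /bigcupP [e eF ve] ->; exists (relabel f e); first exact: imset_f.
by rewrite relabelE_in // imset_f.
Qed.

Lemma card_relabel : #|relabel f @: F| = #|F|.
Proof.
apply: card_in_imset => e1 e2 e1F e2F /(congr1 val).
rewrite !relabelE_in // => eq_img; apply: val_inj.
exact: imset_in_inj injf (sub_Ucup e1F) (sub_Ucup e2F) eq_img.
Qed.

Lemma tau_relabel :
  {in Ucup F, forall u, rk (f @: Ucup F) (f u) = rk (Ucup F) u} ->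
  tau (relabel f @: F) = tau F.
Proof.
move=> rkf; rewrite /tau Ucup_relabel -imset_comp; apply: eq_in_imset => e eF /=.
rewrite /rkimg relabelE_in // -imset_comp; apply: eq_in_imset => u ue /=.
by apply: rkf; apply: subsetP (sub_Ucup eF) u ue.
Qed.

End RelabelSet.
End Relabel.

Definition wcover n m (I : 'I_m -> {set 'I_n}) : {set 'I_n} := \bigcup_(i : 'I_m) I i.

Definition blocks_met n m (I : 'I_m -> {set 'I_n}) (p : E n) : {set 'I_m} :=
  [set i | ~~ [disjoint val p & I i]].

(* The default [g0] is returned only for coordinates not covered by the wildcard sets. *)
Definition block_edge n m (I : 'I_m -> {set 'I_n}) (g0 : E m) (p : E n) : E m :=
  insubd g0 (blocks_met I p).

Definition block_image n m (I : 'I_m -> {set 'I_n}) (g0 : E m) (F : {set E n}) :=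
  block_edge I g0 @: [set e in F | val e \subset wcover I].

Definition outer_ones n m (I : 'I_m -> {set 'I_n}) (c : {ffun E n -> bool})
    (F : {set E n}) :=
  [forall e in F, (val e \subset wcover I) || c e].

Section Wildcards.
Variables (n m : nat) (I : 'I_m -> {set 'I_n}) (g0 : E m).
Hypothesis wcI : wildcards I.
Implicit Types (p e : E n) (q : E m).

Lemma wildcard_uniq i j u : u \in I i -> u \in I j -> i = j.
Proof.
case: wcI => disI _ _ ui uj; apply/eqP; apply: contraT => /disI.
by move/disjointFr/(_ ui); rewrite uj.
Qed.

Lemma card_blocks_met p : val p \subset wcover I -> 0 < #|blocks_met I p| <= 2.
Proof.
move=> pW; case/andP: (valP p) => p_gt0 p_le2; apply/andP; split.
  have /card_gt0P [u up] := p_gt0; have /bigcupP [i _ ui] := subsetP pW u up.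
  by apply/card_gt0P; exists i; rewrite inE; apply/not_disjointP; exists u.
apply: leq_trans p_le2.
pose blk u := [pick i | u \in I i].
rewrite -(card_imset _ (@Some_inj _)); apply: leq_trans (leq_imset_card blk (val p)).
apply/subset_leq_card/subsetP => _ /imsetP [i + ->]; rewrite inE => /not_disjointP [u up ui].
apply/imsetP; exists u; rewrite // /blk; case: pickP => [j uj | /(_ i)]; last by rewrite ui.
by rewrite (wildcard_uniq ui uj).
Qed.

Lemma block_edgeE p : val p \subset wcover I -> val (block_edge I g0 p) = blocks_met I p.
Proof. by move=> pW; rewrite insubdK //; apply: card_blocks_met. Qed.

Lemma bq_block_edge p q : val p \subset wcover I -> bq I q p = (q == block_edge I g0 p).
Proof.
move=> pW; rewrite -val_eqE block_edgeE //; apply/andP/eqP.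
  case=> /subsetP pq /forall_inP meets; apply/setP => i; rewrite inE.
  apply/idP/idP; first exact: meets.
  case/not_disjointP => u up ui; have /bigcupP [j jq uj] := pq u up.
  by rewrite (wildcard_uniq ui uj).
move=> ->; split; last by apply/forall_inP => i; rewrite inE.
apply/subsetP => u up; have /bigcupP [i _ ui] := subsetP pW u up.
by apply/bigcupP; exists i => //; rewrite inE; apply/not_disjointP; exists u.
Qed.

Lemma HJembE c x p : c_admissible I c ->
  HJemb I c x p = if val p \subset wcover I then x (block_edge I g0 p) else c p.
Proof.
move=> admc; rewrite !ffunE; case: ifP => pW.
  rewrite admc // addbF (bigD1 (block_edge I g0 p)) //= bq_block_edge // eqxx andbT.
  by rewrite big1 ?addbF // => q /negbTE ne; rewrite bq_block_edge // ne andbF.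
rewrite big1 // => q _; apply/negbTE; rewrite negb_and negb_and; apply/orP; right.
apply/orP; left; apply: contraFN pW => /subset_trans; apply.
by apply/bigcupsP => i _; apply: bigcup_sup.
Qed.

Lemma prod_HJemb (R : comPzSemiRingType) c x (F : {set E n}) : c_admissible I c ->
  (\prod_(e in F) ((HJemb I c x e : nat)%:R : R) =
   (outer_ones I c F : nat)%:R * \prod_(g in block_image I g0 F) (x g : nat)%:R)%R.
Proof.
move=> admc; rewrite !prodr_nat_bool -natrM mulnb; congr ((nat_of_bool _)%:R)%R.
apply/forall_inP/andP => [allF | [/forall_inP outF /forall_inP inF] e eF].
  split; apply/forall_inP.
    by move=> e /allF; rewrite HJembE //; case: ifP.
  by move=> _ /imsetP [e + ->]; rewrite inE => /andP [/allF + eW]; rewrite HJembE // eW.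
rewrite HJembE //; case: ifP => eW; first by apply: inF; apply: imset_f; rewrite inE eF.
by have := outF e eF; rewrite eW.
Qed.

Lemma card_Ucup_wildcard (F : {set E n}) (i0 : 'I_m) :
  Ucup F \subset wcover I -> {in F &, injective (block_edge I g0)} ->
  #|Ucup F :&: I i0| <= #|F|.+1.
Proof.
move=> FW injF; pose inside e := blocks_met I e == [set i0].
have eW e : e \in F -> val e \subset wcover I.
  by move=> eF; apply: subset_trans (sub_Ucup eF) FW.
(* Only a coordinate whose block edge is {i0} can meet I i0 twice. *)
have le_e e : e \in F -> #|val e :&: I i0| <= 1 + inside e.
  move=> eF; case/andP: (valP e) => /card_gt0P [u0 u0e] e_le2.
  case: (boolP (inside e)) => [_ | ].
    exact: leq_trans (subset_leq_card (subsetIl _ _)) e_le2.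
  apply: contraNT; rewrite -ltnNge addn0 => e_gt1; have eI : val e \subset I i0.
    rewrite -(eqP (_ : val e :&: I i0 == val e)) ?subsetIr //.
    by rewrite eqEcard subsetIl (leq_trans e_le2).
  apply/eqP/setP => i; rewrite !inE; apply/not_disjointP/eqP => [[u ue ui] | ->].
    by apply/esym/(wildcard_uniq (subsetP eI u ue) ui).
  by exists u0; rewrite ?(subsetP eI).
have inside_le1 : #|[set e in F | inside e]| <= 1.
  apply/card_le1_eqP => e1 e2; rewrite !inE => /andP [e1F /eqP b1] /andP [e2F /eqP b2].
  by apply: injF => //; apply: val_inj; rewrite !block_edgeE ?eW // b1 b2.
have -> : Ucup F :&: I i0 = \bigcup_(e in F) (val e :&: I i0).
  apply/setP => u; rewrite inE; apply/andP/bigcupP => [[/bigcupP [e eF ue] ui] | [e eF]].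
    by exists e; rewrite ?inE ?ue.
  by rewrite inE => /andP [ue ui]; split => //; apply/bigcupP; exists e.
apply: leq_trans (leq_card_bigcup _ _) (leq_trans (leq_sum _ le_e) _).
rewrite big_split /= sum1_card -addn1 leq_add2l (leq_trans _ inside_le1) //.
by rewrite -sum1dep_card big_mkcondr; apply/eq_leq/eq_bigr => e _; case: (inside e).
Qed.

End Wildcards.

Definition block_shift n m (I : 'I_m -> {set 'I_n}) (i0 : 'I_m) (U S : {set 'I_n})
    (u : 'I_n) : 'I_n :=
  if u \in U :&: I i0 then rank_match (U :&: I i0) S u else u.

Section Blocks.
Variables (n m : nat) (I : 'I_m -> {set 'I_n}) (g0 : E m).
Hypotheses (wcI : wildcards I) (blkI : block I).

Lemma block_lt (i j : 'I_m) (a b : 'I_n) : i < j -> a \in I i -> b \in I j -> a < b.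
Proof.
case: wcI => _ neI _ ltij; have [d eq_j] : exists d, nat_of_ord j = i + d.+1.
  by exists (j - i.+1); rewrite addnS -addSn subnKC.
elim: d j b eq_j {ltij} => [|d IHd] j b eq_j ai bj.
  by apply: blkI ai bj; rewrite eq_j addn1.
have lt_m : i + d.+1 < m by have := ltn_ord j; rewrite eq_j; lia.
have /set0Pn [c ci] := neI (Ordinal lt_m).
apply: (@ltn_trans c); first exact: IHd (Ordinal lt_m) c erefl ai ci.
by apply: (blkI _ ci bj); rewrite eq_j addnS.
Qed.

Lemma ltn_wildcard (i j : 'I_m) (u v : 'I_n) :
  u \in I i -> v \in I j -> i != j -> (u < v) = (i < j).
Proof.
move=> ui vj; case: (ltngtP i j) => [ltij | ltji | /val_inj ->]; last by rewrite eqxx.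
  by rewrite (block_lt ltij ui vj).
by rewrite ltnNge ltnW // (block_lt ltji vj ui).
Qed.

Lemma rk_wildcard (i j : 'I_m) (S : {set 'I_n}) (u : 'I_n) :
  S \subset I i -> u \in I j -> i != j -> rk S u = (if i < j then #|S| else 0) :> nat.
Proof.
move=> SI uj neij; rewrite /=.
have -> : [set v in S | v < u] = if i < j then S else set0.
  apply/setP => v; rewrite !inE; case: (boolP (v \in S)) => [vS | /negbTE nvS] /=.
    by rewrite (ltn_wildcard (subsetP SI v vS) uj neij); case: ifP; rewrite ?inE.
  by case: ifP; rewrite ?inE.
by case: ifP; rewrite ?cards0.
Qed.

Lemma block_image_inner (F : {set E n}) :
  Ucup F \subset wcover I -> block_image I g0 F = block_edge I g0 @: F.
Proof.
move=> FW; rewrite /block_image (_ : [set e in F | _] = F) //.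
apply/setP => e; rewrite inE andb_idr // => eF.
exact: subset_trans (sub_Ucup eF) FW.
Qed.

Section BlockShift.
Variables (i0 : 'I_m) (U S : {set 'I_n}).
Hypotheses (UW : U \subset wcover I) (SI : S \subset I i0) (cardS : #|U :&: I i0| = #|S|).
Local Notation sg := (block_shift I i0 U S).

Lemma block_shift_in u : u \in U :&: I i0 -> sg u \in S.
Proof. by move=> uS0; rewrite /block_shift uS0; case: (rank_matchP cardS uS0). Qed.

Lemma block_shift_out u : u \notin U :&: I i0 -> sg u = u.
Proof. by rewrite /block_shift => /negbTE ->. Qed.

Lemma mem_block_shift u i : u \in U -> (sg u \in I i) = (u \in I i).
Proof.
move=> uU; case: (boolP (u \in U :&: I i0)) => [uS0 | /block_shift_out -> //].
have sgi0 : sg u \in I i0 := subsetP SI _ (block_shift_in uS0).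
have ui0 : u \in I i0 by move: uS0; rewrite inE => /andP [].
by apply/idP/idP => [/(wildcard_uniq wcI sgi0) <- | /(wildcard_uniq wcI ui0) <-].
Qed.

Lemma block_shift_inj : {in U &, injective sg}.
Proof.
move=> u v uU vU eq_sg.
have eq_in : (u \in U :&: I i0) = (v \in U :&: I i0).
  by rewrite !inE uU vU -(mem_block_shift i0 uU) -(mem_block_shift i0 vU) eq_sg.
case: (boolP (u \in U :&: I i0)) eq_in => [uS0 vS0 | /block_shift_out suu /esym/negbT vS0].
  move: eq_sg; rewrite /block_shift uS0 -vS0.
  exact: (rank_match_inj cardS uS0 (esym vS0)).
by rewrite -suu eq_sg block_shift_out.
Qed.

Lemma block_shift_imset : sg @: U = (U :\: I i0) :|: S.
Proof.
transitivity (sg @: ((U :&: I i0) :|: (U :\: I i0))); first by rewrite setID.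
rewrite imsetU setUC; congr (_ :|: _).
  rewrite -[RHS]imset_id; apply: eq_in_imset => u uR; apply: block_shift_out.
  by move: uR; rewrite !inE => /andP [/negbTE ->]; rewrite andbF.
apply: etrans (rank_match_imset cardS); apply: eq_in_imset => u uS0.
by rewrite /block_shift uS0.
Qed.

Lemma rk_block_shift u : u \in U -> rk (sg @: U) (sg u) = rk U u.
Proof.
move=> uU; apply: val_inj; change (rk (sg @: U) (sg u) = rk U u :> nat).
have eqU : U = (U :\: I i0) :|: (U :&: I i0) by rewrite setUC setID.
have disj_R (T : {set 'I_n}) : T \subset I i0 -> [disjoint U :\: I i0 & T].
  move=> TI; rewrite -setI_eq0; apply/eqP/setP => v; rewrite !inE.
  by case vT: (v \in T); rewrite ?andbF // (subsetP TI v vT).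
rewrite block_shift_imset [in RHS]eqU !rk_setU ?disj_R ?subsetIr //.
have [j _ uj] := bigcupP (subsetP UW u uU).
case: (boolP (u \in U :&: I i0)) => [uS0 | uS0].
  have sgu_i0 : sg u \in I i0 := subsetP SI _ (block_shift_in uS0).
  have ui0 : u \in I i0 by move: uS0; rewrite inE => /andP [].
  congr addn; last first.
    by rewrite /block_shift uS0; case: (rank_matchP cardS uS0) => _ ->.
  apply: eq_card => v; rewrite !inE; case: (boolP (v \in I i0)) => //= vi0.
  case: (boolP (v \in U)) => //= vU; have [k _ vk] := bigcupP (subsetP UW v vU).
  have neki0 : k != i0 by apply: contraNneq vi0 => <-.
  by rewrite (ltn_wildcard vk sgu_i0 neki0) (ltn_wildcard vk ui0 neki0).
have neji0 : i0 != j.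
  by apply: contraNneq uS0 => eq_i0; rewrite inE uU eq_i0 uj.
rewrite block_shift_out //; congr addn.
by rewrite (rk_wildcard SI uj neji0) (rk_wildcard (subsetIr U _) uj neji0) cardS.
Qed.

End BlockShift.

Lemma block_relabel (F0 : {set E n}) (i0 : 'I_m) (S : {set 'I_n}) :
  Ucup F0 \subset wcover I -> S \subset I i0 -> #|Ucup F0 :&: I i0| = #|S| ->
  exists F : {set E n}, [/\ Ucup F :&: I i0 = S, Ucup F :\: I i0 = Ucup F0 :\: I i0,
    tau F = tau F0, #|F| = #|F0| & block_image I g0 F = block_image I g0 F0].
Proof.
move=> F0W SI cardS; set sg := block_shift I i0 (Ucup F0) S.
have injsg : {in Ucup F0 &, injective sg} := block_shift_inj SI cardS.
exists (relabel sg @: F0).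
have UF : Ucup (relabel sg @: F0) = (Ucup F0 :\: I i0) :|: S.
  by rewrite Ucup_relabel // block_shift_imset.
have Si0 u : u \in S -> u \in I i0 := subsetP SI u.
split.
- rewrite UF; apply/setP => u; rewrite !inE.
  by move: (Si0 u); case: (u \in S); case: (u \in I i0); case: (_ \in _) => //= /(_ isT).
- rewrite UF; apply/setP => u; rewrite !inE.
  by move: (Si0 u); case: (u \in S); case: (u \in I i0); case: (_ \in _) => //= /(_ isT).
- exact: tau_relabel injsg (rk_block_shift F0W SI cardS).
- exact: card_relabel injsg.
have sgW : Ucup (relabel sg @: F0) \subset wcover I.
  rewrite UF subUset (subset_trans _ F0W) ?subsetDl //.
  by apply: subset_trans SI _; apply: bigcup_sup.
rewrite !block_image_inner // -imset_comp; apply: eq_in_imset => e eF /=.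
have eW : val e \subset wcover I := subset_trans (sub_Ucup eF) F0W.
have sgeW : val (relabel sg e) \subset wcover I.
  by apply: subset_trans sgW; apply: sub_Ucup; apply: imset_f.
apply: val_inj; rewrite !block_edgeE //; apply/setP => i.
rewrite !inE (relabelE_in injsg eF).
have eU := subsetP (sub_Ucup eF).
apply/not_disjointP/not_disjointP => [[_ /imsetP [u ue ->]] | [u ue]].
  by rewrite mem_block_shift ?eU //; exists u.
rewrite -(mem_block_shift SI cardS) ?eU // => sgui.
by exists (sg u); rewrite ?imset_f.
Qed.

Section Fiber.
Variables (d : nat) (G : {set E m}).
Hypothesis dG : d <= #|G|.

Definition in_fiber (F : {set E n}) := (0 < #|F| <= d) && (block_image I g0 F == G).

Lemma in_fiberP F : in_fiber F ->
  [/\ Ucup F \subset wcover I, #|F| = d, {in F &, injective (block_edge I g0)}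
    & block_edge I g0 @: F = G].
Proof.
case/andP => /andP [_ Fd] /eqP imF; set Fin := [set e in F | val e \subset wcover I].
have FinF : Fin \subset F by apply/subsetP => e; rewrite inE => /andP [].
have G_le : #|G| <= #|Fin| by rewrite -imF leq_imset_card.
have eqFin : Fin = F.
  by apply/eqP; rewrite eqEcard FinF (leq_trans Fd (leq_trans dG G_le)).
have FW : Ucup F \subset wcover I.
  by apply/bigcupsP => e; rewrite -eqFin inE => /andP [].
have imF' : block_edge I g0 @: F = G by rewrite -block_image_inner.
have cardF : #|F| = d.
  by apply/eqP; rewrite eqn_leq Fd (leq_trans dG) // -imF' leq_imset_card.
split => //; apply/imset_injP; rewrite imF' eqn_leq -{1}imF' leq_imset_card.
by rewrite cardF.
Qed.

Variable i0 : 'I_m.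
Hypothesis i0G : exists2 g, g \in G & i0 \in val g.

(* The size of [Ucup F :&: I i0] is stored in 'I_n.+1 so that keys form a finType. *)
Definition fiber_key (F : {set E n}) :=
  (tau F, Ucup F :\: I i0, inord #|Ucup F :&: I i0| : 'I_n.+1).

Lemma card_fiber_class F0 : in_fiber F0 ->
  #|[set F | in_fiber F && (fiber_key F == fiber_key F0)]| =
  'C(#|I i0|, #|Ucup F0 :&: I i0|).
Proof.
move=> F0fib; have [F0W _ _ _] := in_fiberP F0fib.
have card_le (Z : {set 'I_n}) : #|Z| <= n by rewrite -[X in _ <= X]card_ord max_card.
have eq_key F : fiber_key F = fiber_key F0 ->
    [/\ tau F = tau F0, Ucup F :\: I i0 = Ucup F0 :\: I i0
      & #|Ucup F :&: I i0| = #|Ucup F0 :&: I i0|].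
  by case=> -> -> /(congr1 val); rewrite /= !inordK ?ltnS ?card_le.
rewrite -cards_draws -(@card_in_imset _ _ (fun F => Ucup F :&: I i0)).
  apply: eq_card => S; rewrite [in RHS]inE; apply/imsetP/andP.
    case=> F; rewrite inE => /andP [_ /eqP /eq_key [_ _ cardF]] ->.
    by rewrite subsetIr cardF.
  case=> SI /eqP cardS.
  have [F [FS FR tauF cardF imF]] := block_relabel F0W SI (esym cardS).
  exists F => //; rewrite inE /in_fiber cardF imF.
  by case/andP: F0fib => -> -> /=; rewrite /fiber_key tauF FR FS cardS.
move=> F1 F2; rewrite !inE => /andP [_ /eqP /eq_key [tau1 R1 _]].
case/andP => [_ /eqP /eq_key [tau2 R2 _]] S12.
apply: tau_inj; last by rewrite tau1 tau2.
by rewrite -(setID (Ucup F1) (I i0)) -(setID (Ucup F2) (I i0)) S12 R1 R2.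
Qed.

Lemma card_Ucup_fiber F0 : in_fiber F0 -> 0 < #|Ucup F0 :&: I i0| <= d.+1.
Proof.
move=> F0fib; have [F0W cardF0 injF0 imF0] := in_fiberP F0fib.
rewrite -cardF0 (card_Ucup_wildcard wcI i0 F0W injF0) andbT.
case: i0G => g; rewrite -imF0 => /imsetP [e eF0 ->].
have eW : val e \subset wcover I := subset_trans (sub_Ucup eF0) F0W.
rewrite block_edgeE // inE => /not_disjointP [u ue ui].
by apply/card_gt0P; exists u; rewrite inE ui andbT; apply/bigcupP; exists e.
Qed.

End Fiber.

End Blocks.

Local Open Scope ring_scope.

Definition coef_HJemb n m k (I : 'I_m -> {set 'I_n}) (g0 : E m) (c : {ffun E n -> bool})
    (d : nat) (lam : {set E n} -> 'Z_(2 ^ k)) (G : {set E m}) : 'Z_(2 ^ k) :=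
  \sum_(F : {set E n} | in_fiber I g0 d G F) lam F * (outer_ones I c F : nat)%:R.

Section Coefficients.
Variables (n m k d : nat) (I : 'I_m -> {set 'I_n}) (g0 : E m) (c : {ffun E n -> bool}).
Variables (X : {set 'I_n}) (lam : {set E n} -> 'Z_(2 ^ k)).
Hypotheses (wcI : wildcards I) (blkI : block I) (admc : c_admissible I c).

Lemma HJemb_expand (x : {ffun E m -> bool}) :
  \sum_(F : {set E n} | (0 < #|F| <= d)%N)
     lam F * \prod_(e in F) ((HJemb I c x e : nat)%:R)
  = \sum_(G : {set E m}) coef_HJemb I g0 c d lam G * \prod_(g in G) ((x g : nat)%:R).
Proof.
under eq_bigr do rewrite (prod_HJemb g0 wcI _ x _ admc) mulrA.
rewrite (partition_big (block_image I g0) predT) //=; apply: eq_bigr => G _.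
by rewrite /coef_HJemb mulr_suml; apply: eq_bigr => F /andP [_ /eqP ->].
Qed.

Hypothesis k_gt0 : (0 < k)%N.
Hypothesis canlam : canonical_in d X lam.
Hypothesis IX : forall i, I i \subset X /\ #|I i| = ((d.+1)`! * 2 ^ k)%N.

Lemma coef_HJemb_eq0 (G : {set E m}) :
  (0 < d)%N -> (d <= #|G|)%N -> coef_HJemb I g0 c d lam G = 0.
Proof.
move=> d_gt0 dG.
have [g gG] : exists g, g \in G by apply/set0Pn; rewrite -card_gt0 (leq_trans d_gt0 dG).
have [i0 i0g] : exists i0, i0 \in val g.
  by apply/set0Pn; rewrite -card_gt0; case/andP: (valP g).
have i0G : exists2 g, g \in G & i0 \in val g by exists g.
have WX : wcover I \subset X by apply/bigcupsP => i _; case: (IX i).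
have inX F : in_fiber I g0 d G F -> forall e, e \in F -> val e \subset X.
  case/(in_fiberP dG) => FW _ _ _ e eF.
  by rewrite (subset_trans (sub_Ucup eF)) // (subset_trans FW).
rewrite /coef_HJemb (partition_big (fiber_key I i0) predT) //=; apply: big1 => K _.
case: (pickP [pred F | in_fiber I g0 d G F && (fiber_key I i0 F == K)]);
  last by move=> none; rewrite big_pred0.
move=> F0 /andP [F0fib /eqP <-].
rewrite (eq_bigr (fun _ => lam F0)) => [|F /andP [Ffib /eqP [tauF _ _]]]; last first.
  have [FW _ _ _] := in_fiberP dG Ffib.
  rewrite (_ : outer_ones I c F) ?mulr1; last first.
    by apply/forall_inP => e eF; rewrite (subset_trans (sub_Ucup eF) FW).
  case/andP: (Ffib) (F0fib) => Fd _ /andP [F0d _].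
  exact: canlam (inX F Ffib) Fd (inX F0 F0fib) F0d tauF.
set cls := [set F | in_fiber I g0 d G F && (fiber_key I i0 F == fiber_key I i0 F0)].
rewrite (eq_bigl (fun F => F \in cls)); last by move=> F; rewrite in_set.
have two_k : (1 < 2 ^ k)%N by rewrite -{1}(expn0 2) ltn_exp2l.
rewrite sumr_const card_fiber_class // -mulr_natr; case: (IX i0) => _ ->.
have a_bounds := card_Ucup_fiber wcI dG i0G F0fib.
by rewrite (Zp_nat_eq0 two_k (dvdn_bin_fact _ a_bounds)) mulr0.
Qed.

Lemma intpoly_le_HJemb (Q : {ffun E n -> bool} -> 'Z_(2 ^ k)) alpha :
  (forall x, Q x = alpha + \sum_(F : {set E n} | (0 < #|F| <= d)%N)
                             lam F * \prod_(e in F) ((x e : nat)%:R)) ->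
  (0 < d)%N -> intpoly_le (fun x => Q (HJemb I c x)) d.-1.
Proof.
move=> HQ d_gt0; exists (alpha + coef_HJemb I g0 c d lam set0), (coef_HJemb I g0 c d lam) => x.
rewrite HQ HJemb_expand (bigD1 set0) //= big_set0 mulr1 -addrA; congr (_ + (_ + _)).
rewrite (bigID (fun G : {set E m} => #|G| <= d.-1)%N) /= [X in _ + X = _]big1 ?addr0.
  by apply: eq_bigl => G; rewrite card_gt0.
move=> G /andP [_]; rewrite -ltnNge prednK // => dG.
by rewrite coef_HJemb_eq0 ?mul0r.
Qed.

End Coefficients.

Lemma intpoly_deg_exists k (N : finType) (Q : {ffun N -> bool} -> 'Z_(2 ^ k)) b :
  intpoly_le Q b -> exists2 d, intpoly_deg Q d & (d <= b)%N.
Proof.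
move=> Qb; have [|d [[Qd mind] _]] :=
  dec_inh_nat_subset_has_unique_least_element (intpoly_le Q) (fun d => classic _).
  by exists b.
by exists d; [split=> // d' /mind /leP | apply/leP/mind].
Qed.

Unset Implicit Arguments.
Theorem lemma5p10 (n k : nat) (X : {set 'I_n}) (d : nat)
    (Q : {ffun E n -> bool} -> 'Z_(2 ^ k))
    (alpha : 'Z_(2 ^ k)) (lam : {set E n} -> 'Z_(2 ^ k))
    (m : nat) (I : 'I_m -> {set 'I_n}) (c : {ffun E n -> bool}) :
  (0 < n)%N -> (0 < k)%N -> X != set0 -> (1 <= d)%N ->
  (forall x, Q x = alpha + \sum_(F : {set E n} | (0 < #|F| <= d)%N)
                             lam F * \prod_(e in F) ((x e : nat)%:R)) ->
  intpoly_deg Q d ->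
  (1 <= m)%N -> wildcards I -> block I -> c_admissible I c ->
  canonical_in d X lam ->
  (forall i, I i \subset X /\ #|I i| = ((d.+1)`! * 2 ^ k)%N) ->
  exists d', intpoly_deg (fun x => Q (HJemb I c x)) d' /\ (d' < d)%N.
Proof.
move=> _ k_gt0 _ d_gt0 HQ _ m_gt0 wcI blkI admc canlam IX.
have g0 : E m by exists [set Ordinal m_gt0]; rewrite cards1.
have [d' deg_d' le_d'] :=
  intpoly_deg_exists (intpoly_le_HJemb g0 wcI blkI admc k_gt0 canlam IX HQ d_gt0).
by exists d'; split; last by rewrite (leq_ltn_trans le_d') // ltn_predL.
Qed.
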